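(* Let $m\le n$ be positive integers, $\gamma,\tau,\delta>0$ with $\eta=\sqrt{\tau+\gamma}<1/2$, and let $\mathbf{A}$ be a random variable valued in $\mathbb{F}_2^{m\times n}$ with $H_\infty(\mathbf{A})\ge(1-\gamma)mn$. Then $$\Pr[\mathbf{A}\text{ is }(\tau,\delta)\text{-bad}]\le m\cdot 2^{-\tau n}+m\cdot\delta\cdot 2^{h(\eta)m}.$$
   Context: $h$ is the binary entropy function, $H_\infty(X)=-\log_2\max_x\Pr[X=x]$. For a matrix $A$, $A_i$ is its $i$-th row, $A_{[i]}$ its first $i$ rows. $p_i(A)=\Pr[\mathbf{A}_i=A_i\mid\mathbf{A}_{[i-1]}=A_{[i-1]}]$, $q_i(A)=-\log_2p_i(A)$; $A$ is $\tau$-rare if $p_i(A)<2^{-n(1+\tau)}$ for some $i$. Fix a function $B$ on $\mathrm{supp}(\mathbf{A})$: if $A$ is $\tau$-rare then $B(A)=\bot$; otherwise $B(A)$ is a (fixed choice of) subset $S\subseteq[m]$ with $|S|\le\eta m$ and $q_i(A)\ge(1-\eta)n$ for all $i\notin S$ (such $S$ exists). $A\in\mathrm{supp}(\mathbf{A})$ is $(\tau,\delta)$-bad if $A$ is $\tau$-rare, or there is $i\in[m]$ with $\Pr[B(\mathbf{A})=B(A)\mid\mathbf{A}_{[i-1]}=A_{[i-1]}]<\delta$. *)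

From mathcomp Require Import all_boot all_algebra.
From Stdlib Require Import Reals.
Set Implicit Arguments. Unset Strict Implicit. Unset Printing Implicit Defensive.

Local Open Scope R_scope.

Definition Rltb (x y : R) : bool := if Rlt_dec x y then true else false.

Definition log2 (x : R) : R := ln x / ln 2.

Definition h (p : R) : R := - p * log2 p - (1 - p) * log2 (1 - p).

Section Prob.
Variables m n : nat.
Notation mat := 'M['F_2]_(m, n).

(* A random variable valued in F_2^{m x n} is given by its probability mass function *)
Definition is_distr (P : mat -> R) : Prop :=
  (forall A, 0 <= P A) /\ \big[Rplus/0]_(A : mat) P A = 1.

Definition Pr (P : mat -> R) (E : pred mat) : R := \big[Rplus/0]_(A : mat | E A) P A.

Definition condPr (P : mat -> R) (E F : pred mat) : R :=
  Pr P (predI E F) / Pr P F.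

Definition Hinf (P : mat -> R) : R := - log2 (\big[Rmax/0]_(A : mat) P A).

Definition in_supp (P : mat -> R) (A : mat) : bool := Rltb 0 (P A).

(* A'_{[i-1]} = A_{[i-1]} for (0-indexed) row i : rows j < i agree *)
Definition prefix_eq (i : nat) (A A' : mat) : bool :=
  [forall j : 'I_m, (ltn j i ==> (row j A' == row j A))%B].

Definition p_i (P : mat -> R) (A : mat) (i : 'I_m) : R :=
  condPr P (fun A' => row i A' == row i A) (prefix_eq i A).

Definition q_i (P : mat -> R) (A : mat) (i : 'I_m) : R := - log2 (p_i P A i).

Definition rare (P : mat -> R) (tau : R) (A : mat) : bool :=
  [exists i : 'I_m, Rltb (p_i P A i) (Rpower 2 (- (INR n * (1 + tau))))].

Definition B_spec (P : mat -> R) (tau eta : R) (B : mat -> option {set 'I_m}) : Prop :=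
  forall A, in_supp P A ->
    (rare P tau A -> B A = None) /\
    (~~ rare P tau A ->
       exists S : {set 'I_m}, B A = Some S /\ INR #|S| <= eta * INR m /\
         forall i : 'I_m, i \notin S -> (1 - eta) * INR n <= q_i P A i).

Definition bad (P : mat -> R) (tau delta : R) (B : mat -> option {set 'I_m}) (A : mat) : bool :=
  rare P tau A ||
  [exists i : 'I_m,
     Rltb (condPr P (fun A' => B A' == B A) (prefix_eq i A)) delta].

End Prob.

(* Fix a row index i and partition the matrices into prefix classes (equal
   rows before i).  Inside a class, the matrices A whose value g A has
   conditional probability < c given the class form, for each value v, a set
   of conditional mass < c; so together they have conditional mass below
   c times the number of values of g.  For rarity g is the i-th row (2^n
   values, c = 2^(-n(1+tau))); for the second event g is B, whose values on
   non-rare matrices are the sets of size <= eta m, at most 2^(h(eta) m) of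
   them.  A union bound over the m rows concludes.  The min-entropy hypothesis
   is only what makes B exist, and B_spec already provides it. *)
From HB Require Import structures.
From mathcomp Require Import all_boot all_algebra.
From Stdlib Require Import Reals Lra.
Set Implicit Arguments.
Unset Strict Implicit.
Local Open Scope R_scope.

Lemma RplusA : associative Rplus. Proof. by move=> *; ring. Qed.
Lemma RmultA : associative Rmult. Proof. by move=> *; ring. Qed.
HB.instance Definition _ := Monoid.isComLaw.Build R 0 Rplus RplusA Rplus_comm Rplus_0_l.
HB.instance Definition _ := Monoid.isComLaw.Build R 1 Rmult RmultA Rmult_comm Rmult_1_l.
HB.instance Definition _ := Monoid.isMulLaw.Build R 0 Rmult Rmult_0_l Rmult_0_r.
HB.instance Definition _ :=
  Monoid.isAddLaw.Build R Rmult Rplus Rmult_plus_distr_r Rmult_plus_distr_l.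

Definition Rleb (x y : R) : bool := if Rle_dec x y then true else false.

Lemma Rinv_ge0 x : 0 <= x -> 0 <= / x.
Proof.
move=> x_ge0; have [->|x_neq0] := Req_dec x 0; first by rewrite Rinv_0; lra.
by apply/Rlt_le/Rinv_0_lt_compat; lra.
Qed.

Lemma exp_le_mono x y : x <= y -> exp x <= exp y.
Proof. by case=> [/exp_increasing/Rlt_le|->] //; right. Qed.

Lemma iter_Rplus k c : iter k (Rplus c) 0 = INR k * c.
Proof. by elim: k => [|k IH]; rewrite ?iterS ?IH ?S_INR /=; ring. Qed.

Lemma sumR_const_ord k c : \big[Rplus/0]_(i < k) c = INR k * c.
Proof. by rewrite big_const_ord iter_Rplus. Qed.

Lemma iter_Rmult k a : iter k (Rmult a) 1 = a ^ k.
Proof. by elim: k => //= k ->. Qed.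

Lemma sumR_le (I : Type) (r : seq I) (p : pred I) (F G : I -> R) :
  (forall i, p i -> F i <= G i) ->
  \big[Rplus/0]_(i <- r | p i) F i <= \big[Rplus/0]_(i <- r | p i) G i.
Proof. by move=> FG; apply: (big_ind2 (fun x y => x <= y)) => //; [lra | intros; lra]. Qed.

Lemma sumR_ge0 (I : Type) (r : seq I) (p : pred I) (F : I -> R) :
  (forall i, p i -> 0 <= F i) -> 0 <= \big[Rplus/0]_(i <- r | p i) F i.
Proof. by move=> F0; apply: (big_ind (fun x => 0 <= x)) => //; [lra | intros; lra]. Qed.

Lemma sumR_subset_le (I : finType) (p q : pred I) (F : I -> R) :
  (forall i, p i -> q i) -> (forall i, q i -> 0 <= F i) ->
  \big[Rplus/0]_(i | p i) F i <= \big[Rplus/0]_(i | q i) F i.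
Proof.
move=> pq F0; rewrite (big_mkcond p) (big_mkcond q); apply: sumR_le => i _.
case pi: (p i); first by rewrite (pq _ pi); lra.
by case qi: (q i); [exact: F0 | lra].
Qed.

Lemma sumR_le_sum_fibers (T : finType) (V : eqType) (q : pred T) (g : T -> V)
    (vs : seq V) (F : T -> R) :
  (forall x, 0 <= F x) -> (forall x, q x -> g x \in vs) ->
  \big[Rplus/0]_(x | q x) F x
    <= \big[Rplus/0]_(v <- vs) \big[Rplus/0]_(x | g x == v) F x.
Proof.
move=> F0 gq.
have ite_ge0 x v : 0 <= (if g x == v then F x else 0) by case: (g x == v); [exact: F0 | lra].
have -> : \big[Rplus/0]_(v <- vs) \big[Rplus/0]_(x | g x == v) F x
          = \big[Rplus/0]_x \big[Rplus/0]_(v <- vs) (if g x == v then F x else 0).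
  by rewrite exchange_big /=; apply: eq_bigr => v _; rewrite big_mkcond.
rewrite big_mkcond; apply: sumR_le => x _.
case qx: (q x); last exact: sumR_ge0.
rewrite (big_rem (g x)) ?gq //= eqxx.
have := @sumR_ge0 _ (rem (g x) vs) xpredT _ (fun v _ => ite_ge0 x v); lra.
Qed.

Lemma le_ratio_mul (p N D c : R) :
  0 < p -> p <= N -> N <= D -> N / D < c -> p <= c * (p * D / N).
Proof.
move=> p_gt0 pN ND NDc.
have D_gt0 : 0 < D by lra.
have N_lt : N < c * D.
  have := Rmult_lt_compat_r D _ _ D_gt0 NDc.
  by rewrite /Rdiv Rmult_assoc Rinv_l ?Rmult_1_r; lra.
have ratio_gt1 : 1 < c * D / N.
  apply: (Rmult_lt_reg_r N); first lra.
  by rewrite /Rdiv Rmult_assoc Rinv_l; lra.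
have -> : c * (p * D / N) = p * (c * D / N) by rewrite /Rdiv; ring.
nra.
Qed.

Section ClassConditional.
Variables (T : finType) (V : eqType) (P : T -> R) (r : rel T) (g : T -> V).
Hypothesis P_ge0 : forall x, 0 <= P x.
Hypothesis r_refl : reflexive r.
Hypothesis r_sym : symmetric r.
Hypothesis r_trans : transitive r.

Definition class_mass x := \big[Rplus/0]_(y | r x y) P y.
Definition fiber_mass x := \big[Rplus/0]_(y | (g y == g x) && r x y) P y.

Lemma fiber_mass_ge x : P x <= fiber_mass x.
Proof.
rewrite /fiber_mass (bigD1 x) /=; last by rewrite eqxx r_refl.
have := @sumR_ge0 _ (index_enum T) (fun y => (g y == g x) && r x y && (y != x)) P
  (fun y _ => P_ge0 y).
lra.
Qed.

Lemma fiber_mass_le_class x : fiber_mass x <= class_mass x.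
Proof. by apply: sumR_subset_le => [y /andP[]|y _]. Qed.

(* Reweighting by class_mass / fiber_mass makes each fiber {g = v} of a class
   carry at most the mass of the whole class. *)
Lemma sum_fiber_reweighted_le (v : V) :
  \big[Rplus/0]_(x | g x == v) (P x * class_mass x / fiber_mass x)
    <= \big[Rplus/0]_x P x.
Proof.
pose t x y := if (g x == v) && r x y then P x * P y / fiber_mass x else 0.
have -> : \big[Rplus/0]_(x | g x == v) (P x * class_mass x / fiber_mass x)
          = \big[Rplus/0]_x \big[Rplus/0]_y t x y.
  rewrite big_mkcond; apply: eq_bigr => x _; rewrite /t.
  case: (g x == v) => /=; last by rewrite big1.
  rewrite /class_mass /Rdiv Rmult_assoc (Rmult_comm _ (/ _)) -Rmult_assoc.
  rewrite big_distrr big_mkcond; apply: eq_bigr => y _.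
  by case: (r x y) => /=; ring.
rewrite exchange_big; apply: sumR_le => y _.
pose M := \big[Rplus/0]_(z | (g z == v) && r y z) P z.
have M_ge0 : 0 <= M by apply: sumR_ge0.
have -> : \big[Rplus/0]_x t x y = M * (P y / M).
  rewrite /M big_distrl [RHS]big_mkcond /=; apply: eq_bigr => x _; rewrite /t.
  case gx: (g x == v); last by rewrite /=; ring.
  rewrite r_sym; case ryx: (r y x) => /=; last by ring.
  have -> : fiber_mass x = M.
    rewrite /fiber_mass (eqP gx); apply: eq_bigl => z.
    case: (g z == v) => //=; apply/idP/idP; apply: r_trans => //.
    by rewrite r_sym.
  by rewrite -/M /Rdiv; ring.
have [->|M_neq0] := Req_dec M 0; first by rewrite Rmult_0_l; apply: P_ge0.
by right; field.
Qed.

Lemma mass_small_fiber_le (q : pred T) (vs : seq V) (c : R) :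
  0 < c -> (forall x, q x -> 0 < P x) -> (forall x, q x -> g x \in vs) ->
  \big[Rplus/0]_(x | q x && Rltb (fiber_mass x / class_mass x) c) P x
    <= c * INR (size vs) * \big[Rplus/0]_x P x.
Proof.
move=> c_gt0 qP qg.
pose f x := P x * class_mass x / fiber_mass x.
have f_ge0 x : 0 <= f x.
  apply: Rmult_le_pos; last exact/Rinv_ge0/sumR_ge0.
  by apply: Rmult_le_pos; [exact: P_ge0 | exact: sumR_ge0].
apply: (@Rle_trans _ (\big[Rplus/0]_(x | q x && Rltb (fiber_mass x / class_mass x) c)
                        (c * f x))).
  apply: sumR_le => x /andP[qx]; rewrite /Rltb; case: Rlt_dec => // small _.
  exact: le_ratio_mul (qP x qx) (fiber_mass_ge x) (fiber_mass_le_class x) small.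
rewrite -big_distrr /= Rmult_assoc; apply: Rmult_le_compat_l; first lra.
apply: (@Rle_trans _ (\big[Rplus/0]_(x | q x) f x)).
  by apply: sumR_subset_le => [x /andP[]|x _].
apply: (Rle_trans _ _ _ (sumR_le_sum_fibers f_ge0 qg)).
rewrite -(count_predT vs) -iter_Rplus -big_const_seq.
by apply: sumR_le => v _; exact: sum_fiber_reweighted_le.
Qed.

End ClassConditional.

Lemma INR_expn2 k : INR (expn 2 k) = 2 ^ k.
Proof. by elim: k => //= k IH; rewrite expnS mult_INR IH. Qed.

Lemma prodR_set_indicator (m : nat) (a b : R) (s : {set 'I_m}) :
  \big[Rmult/1]_(i : 'I_m) (if i \in s then a else b) = a ^ #|s| * b ^ (m - #|s|).
Proof.
rewrite (bigID (mem s)) /=.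
rewrite (eq_bigr (fun _ => a)); last by move=> i ->.
rewrite [X in _ * X](eq_bigr (fun _ => b)); last by move=> i /negbTE ->.
rewrite !big_const !iter_Rmult; congr (_ * b ^ _).
have card_sC : addn #|s| #|[predC s]| = m by rewrite -[RHS](card_ord m) cardC.
rewrite (eq_card (_ : _ =i [predC s])) //.
by move: card_sC; move: #|[predC s]| #|s| => k j <-; rewrite addKn.
Qed.

Lemma sumR_subsets_binomial (m : nat) (a b : R) :
  \big[Rplus/0]_(s : {set 'I_m}) (a ^ #|s| * b ^ (m - #|s|)) = (a + b) ^ m.
Proof.
under eq_bigr do rewrite -prodR_set_indicator.
have -> : (a + b) ^ m
          = \big[Rmult/1]_(i : 'I_m) \big[Rplus/0]_(j : bool) (if j then a else b).
  by rewrite (eq_bigr (fun _ => a + b)) ?big_const_ord ?iter_Rmult // => i _; rewrite big_bool.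
rewrite bigA_distr_bigA /= (reindex (fun s : {set 'I_m} => [ffun i => i \in s])) /=.
  by apply: eq_bigr => s _; apply: eq_bigr => i _; rewrite ffunE.
apply: onW_bij; exists (fun f : {ffun 'I_m -> bool} => [set i | f i]).
  by move=> s; apply/setP => i; rewrite inE ffunE.
by move=> f; apply/ffunP => i; rewrite ffunE inE.
Qed.

Lemma small_set_weight_ge (m : nat) (eta : R) (s : {set 'I_m}) :
  0 < eta < 1 / 2 -> INR #|s| <= eta * INR m ->
  Rpower 2 (- (h eta * INR m)) <= eta ^ #|s| * (1 - eta) ^ (m - #|s|).
Proof.
move=> [eta_gt0 eta_lt] small.
have ln2_gt0 : 0 < ln 2 by rewrite -ln_1; apply: ln_increasing; lra.
have ln_lt : ln eta < ln (1 - eta) by apply: ln_increasing; lra.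
have s_le_m : (#|s| <= m)%nat by rewrite -[m in (_ <= m)%nat]card_ord max_card.
have -> : Rpower 2 (- (h eta * INR m))
          = exp (INR m * (eta * ln eta + (1 - eta) * ln (1 - eta))).
  by rewrite /Rpower /h /log2; congr exp; field; lra.
rewrite -!Rpower_pow ?/Rpower -?exp_plus; try lra.
have -> : INR (m - #|s|) = INR m - INR #|s| by rewrite minus_INR //; apply/leP.
apply: exp_le_mono.
have : 0 <= (eta * INR m - INR #|s|) * (ln (1 - eta) - ln eta) by apply: Rmult_le_pos; lra.
nra.
Qed.

(* The weights eta^|s| (1 - eta)^(m - |s|) sum to 1 and are >= 2^(-h(eta) m)
   on small sets. *)
Lemma card_small_sets_le (m : nat) (eta : R) : 0 < eta < 1 / 2 ->
  INR #|[pred s : {set 'I_m} | Rleb (INR #|s|) (eta * INR m)]|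
    <= Rpower 2 (h eta * INR m).
Proof.
move=> eta_bounds.
set w := Rpower 2 (- (h eta * INR m)).
have w_gt0 : 0 < w by apply: exp_pos.
have -> : Rpower 2 (h eta * INR m) = / w by rewrite /w Rpower_Ropp Rinv_inv.
apply: (Rmult_le_reg_r w) => //; rewrite Rinv_l; last lra.
rewrite -iter_Rplus -big_const.
apply: (@Rle_trans _ (\big[Rplus/0]_(s : {set 'I_m} | Rleb (INR #|s|) (eta * INR m))
                        (eta ^ #|s| * (1 - eta) ^ (m - #|s|)))).
  apply: (@sumR_le _ _ _ (fun _ => w)) => s; rewrite inE /Rleb; case: Rle_dec => // small _.
  exact: small_set_weight_ge.
apply: (Rle_trans _ ((eta + (1 - eta)) ^ m)); last by rewrite Rplus_minus pow1; right.
rewrite -sumR_subsets_binomial; apply: (@sumR_subset_le _ _ xpredT) => // s _.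
by apply: Rmult_le_pos; apply: pow_le; lra.
Qed.

Section Matrices.
Variables (m n : nat) (P : 'M['F_2]_(m, n) -> R).
Hypothesis P_distr : is_distr P.

Lemma Pr_le_predU (E E1 E2 : pred 'M['F_2]_(m, n)) :
  (forall A, E A -> E1 A || E2 A) -> Pr P E <= Pr P E1 + Pr P E2.
Proof.
move=> sub; rewrite /Pr (big_mkcond E) (big_mkcond E1) (big_mkcond E2) -big_split /=.
apply: sumR_le => A _; have := P_distr.1 A.
case EA: (E A); last by case: (E1 A); case: (E2 A); lra.
by move: (sub A EA); case: (E1 A); case: (E2 A) => //=; lra.
Qed.

Lemma Pr_exists_le (F : 'I_m -> pred 'M['F_2]_(m, n)) :
  Pr P (fun A => [exists i, F i A]) <= \big[Rplus/0]_(i < m) Pr P (F i).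
Proof.
have ite_ge0 i A : 0 <= (if F i A then P A else 0) by case: (F i A); [exact: P_distr.1 | lra].
rewrite /Pr (eq_bigr (fun i => \big[Rplus/0]_A (if F i A then P A else 0))); last first.
  by move=> i _; rewrite big_mkcond.
rewrite exchange_big /= big_mkcond; apply: sumR_le => A _.
case: existsP => [[i Fi]|_]; last exact: sumR_ge0.
rewrite (bigD1 i) //= Fi.
by rewrite -[X in X <= _]Rplus_0_r; apply: Rplus_le_compat_l; apply: sumR_ge0 => j _.
Qed.

Lemma prefix_eq_refl i : reflexive (@prefix_eq m n i).
Proof. by move=> A; apply/forallP => j; apply/implyP. Qed.

Lemma prefix_eq_sym i : symmetric (@prefix_eq m n i).
Proof.
by move=> A A'; apply/forallP/forallP => eqAA' j; apply/implyP => ji;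
  rewrite eq_sym (implyP (eqAA' j) ji).
Qed.

Lemma prefix_eq_trans i : transitive (@prefix_eq m n i).
Proof.
move=> A2 A1 A3 /forallP eq12 /forallP eq23; apply/forallP => j; apply/implyP => ji.
by rewrite (eqP (implyP (eq23 j) ji)) (eqP (implyP (eq12 j) ji)).
Qed.

Lemma Pr_rare_le (tau : R) :
  Pr P (fun A => [exists i : 'I_m, in_supp P A &&
                    Rltb (p_i P A i) (Rpower 2 (- (INR n * (1 + tau))))])
    <= INR m * Rpower 2 (- tau * INR n).
Proof.
apply: (Rle_trans _ _ _ (Pr_exists_le _)).
rewrite -[X in _ <= X]sumR_const_ord; apply: sumR_le => i _.
apply: (Rle_trans _ _ _ (mass_small_fiber_le P_distr.1 (prefix_eq_refl i)
  (prefix_eq_sym i) (@prefix_eq_trans i) (vs := enum predT) (exp_pos _) _ _)).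
- by move=> A; rewrite /in_supp /Rltb; case: Rlt_dec.
- by move=> A _; rewrite mem_enum.
rewrite P_distr.2 -cardE card_mx card_Fp // mul1n INR_expn2 -Rpower_pow; last lra.
by rewrite Rmult_1_r -Rpower_plus; right; congr Rpower; ring.
Qed.

Lemma Pr_B_unlikely_le (tau eta delta : R) (B : 'M['F_2]_(m, n) -> option {set 'I_m}) :
  0 < eta < 1 / 2 -> 0 < delta -> B_spec P tau eta B ->
  Pr P (fun A => [exists i : 'I_m, (in_supp P A && ~~ rare P tau A) &&
                    Rltb (condPr P (fun A' => B A' == B A) (prefix_eq i A)) delta])
    <= INR m * delta * Rpower 2 (h eta * INR m).
Proof.
move=> eta_bounds delta_gt0 B_ok.
pose small := [pred s : {set 'I_m} | Rleb (INR #|s|) (eta * INR m)].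
have B_small A : in_supp P A && ~~ rare P tau A -> B A \in map Some (enum small).
  case/andP=> suppA not_rare; have [_ /(_ not_rare) [S [-> [card_S _]]]] := B_ok A suppA.
  by apply: map_f; rewrite mem_enum inE /Rleb; case: Rle_dec.
apply: (Rle_trans _ _ _ (Pr_exists_le _)).
rewrite Rmult_assoc -[X in _ <= X]sumR_const_ord; apply: sumR_le => i _.
apply: (Rle_trans _ _ _ (mass_small_fiber_le P_distr.1 (prefix_eq_refl i)
  (prefix_eq_sym i) (@prefix_eq_trans i) delta_gt0 _ B_small)).
  by move=> A /andP[]; rewrite /in_supp /Rltb; case: Rlt_dec.
rewrite P_distr.2 size_map -cardE Rmult_1_r.
by apply: Rmult_le_compat_l; [lra | exact: card_small_sets_le].
Qed.

End Matrices.

Theorem lemmaG7 (m n : nat) (gamma tau delta : R)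
  (P : 'M['F_2]_(m, n) -> R) (B : 'M['F_2]_(m, n) -> option {set 'I_m}) :
  (0 < m)%coq_nat -> (m <= n)%coq_nat ->
  0 < gamma -> 0 < tau -> 0 < delta ->
  sqrt (tau + gamma) < 1 / 2 ->
  is_distr P ->
  (1 - gamma) * INR m * INR n <= Hinf P ->
  B_spec P tau (sqrt (tau + gamma)) B ->
  Pr P (fun A => in_supp P A && bad P tau delta B A)
    <= INR m * Rpower 2 (- tau * INR n)
       + INR m * delta * Rpower 2 (h (sqrt (tau + gamma)) * INR m).
Proof.
move=> _ _ gamma_gt0 tau_gt0 delta_gt0 eta_lt P_distr _ B_ok.
have eta_gt0 : 0 < sqrt (tau + gamma) by apply: sqrt_lt_R0; lra.
apply: (Rle_trans _ _ _ (Pr_le_predU P_distr _)); last first.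
  apply: Rplus_le_compat; first exact: Pr_rare_le.
  exact: Pr_B_unlikely_le (conj eta_gt0 eta_lt) delta_gt0 B_ok.
move=> A /andP[suppA]; rewrite /bad; case rareA: (rare P tau A) => /=.
  by case/existsP: rareA => i rare_i _; apply/orP; left; apply/existsP; exists i; rewrite suppA.
by case/existsP=> i Bi; apply/orP; right; apply/existsP; exists i; rewrite suppA Bi.
Qed.
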